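(* Let $\lambda=\frac{\sqrt5+1}{2}$, $D\mathcal{G}_{\mathbf 0}=\mathrm{diag}(-1,\lambda^{-1},\lambda)$, $M>0$, $C_0>0$, $\Delta_0=\tfrac14$ and $C=1+C_0+\Delta_0$. There exists $\xi_0=\xi_0(C_0,\Delta_0)>0$ such that for all $\xi\in(0,\xi_0)$ and $\Delta\in(0,\Delta_0)$ the following holds. Let $G=(G_x,G_y,G_z):\mathbb{R}^3\to\mathbb{R}^3$ be a $C^2$ diffeomorphism with $\|\nabla\partial_\beta G_\alpha\|<M$ for all $\alpha,\beta\in\{x,y,z\}$ and $G$ $\xi$-close to $D\mathcal{G}_{\mathbf 0}$ in the $C^1$ topology. Let $\gamma=(\gamma_x,\gamma_y,\gamma_z)$ be a $C^2$ curve such that for all $t$: $\|\gamma'(t)\|<C$, $\gamma_x(t)=t$, $\frac{\lambda-\xi-1}{4}|\gamma_z''(t)|>3MC^2$, $\frac{\lambda-\xi-1}{4}|\gamma_z''(t)|>\xi|\gamma_y''(t)|$, $|\gamma_y'(t)|<C_0$ and $|\gamma_z'(t)|<\Delta$. Assume that for some $m\in\mathbb{N}$ and all $n\in\{1,\dots,m\}$: - $G^n\circ\gamma$ can be reparameterized as $\gamma^{(n)}(s)=(s,\gamma^{(n)}_y(s),\gamma^{(n)}_z(s))$ (i.e. $\frac{d}{dt}G^n_x\circ\gamma\neq0$), where $\gamma^{(0)}=\gamma$; - $|\frac{d}{ds}\gamma^{(n)}_y(s)|<C_0$ and $|\frac{d}{ds}\gamma^{(n)}_z(s)|<\Delta$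 for all $s$. Then $\big|\frac{d^2}{ds^2}\gamma^{(n)}_z(\tilde s)\big|>\big|\frac{d^2}{dt^2}\gamma^{(n-1)}_z(\tilde t)\big|$ for all $n\in\{1,\dots,m-1\}$ and all $\tilde t,\tilde s$ with $\gamma^{(n)}(\tilde s)=G\circ\gamma^{(n-1)}(\tilde t)$.
   Context: Each $\gamma^{(n)}$ is the curve with the same image as $G\circ\gamma^{(n-1)}$, parameterized so that its $x$-coordinate equals the parameter; $t$ denotes the parameter of $\gamma^{(n-1)}$ and $s$ that of $\gamma^{(n)}$. *)

From Stdlib Require Import Reals.
From Coquelicot Require Import Coquelicot.
Open Scope R_scope.

Definition pt : Type := (R * R * R)%type.

Inductive ax := AX | AY | AZ.

Definition coord (a : ax) (p : pt) : R :=
  match a with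
  | AX => fst (fst p)
  | AY => snd (fst p)
  | AZ => snd p
  end.

Definition shift (p : pt) (a : ax) (h : R) : pt :=
  match a with
  | AX => (fst (fst p) + h, snd (fst p), snd p)
  | AY => (fst (fst p), snd (fst p) + h, snd p)
  | AZ => (fst (fst p), snd (fst p), snd p + h)
  end.

Definition pderiv (a : ax) (f : pt -> R) (p : pt) : R :=
  Derive (fun h => f (shift p a h)) 0.
Definition has_pderiv (a : ax) (f : pt -> R) (p : pt) : Prop :=
  ex_derive (fun h => f (shift p a h)) 0.

Definition C2fun (f : pt -> R) : Prop :=
  (forall a p, has_pderiv a f p) /\
  (forall a b p, has_pderiv b (pderiv a f) p) /\
  (forall a b p, continuous (pderiv b (pderiv a f)) p).

Definition C2map (G : pt -> pt) : Prop :=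
  forall a, C2fun (fun p => coord a (G p)).

Definition C2diffeo (G : pt -> pt) : Prop :=
  C2map G /\
  exists H : pt -> pt, C2map H /\ (forall p, H (G p) = p) /\ (forall p, G (H p) = p).

Definition lam : R := (sqrt 5 + 1) / 2.

Definition DG0 (p : pt) : pt := (- coord AX p, coord AY p / lam, lam * coord AZ p).
Definition DG0_entry (a b : ax) : R :=
  match a, b with
  | AX, AX => -1
  | AY, AY => / lam
  | AZ, AZ => lam
  | _, _ => 0
  end.

Definition C1_close (xi : R) (G : pt -> pt) : Prop :=
  forall p,
    (forall a, Rabs (coord a (G p) - coord a (DG0 p)) < xi) /\
    (forall a b, Rabs (pderiv b (fun q => coord a (G q)) p - DG0_entry a b) < xi).

Definition norm3 (u v w : R) : R := sqrt (u ^ 2 + v ^ 2 + w ^ 2).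

Definition hess_bound (M : R) (G : pt -> pt) : Prop :=
  forall a b p,
    let g := pderiv b (fun q => coord a (G q)) in
    norm3 (pderiv AX g p) (pderiv AY g p) (pderiv AZ g p) < M.

Definition C2_at (f : R -> R) (t : R) : Prop :=
  ex_derive f t /\ ex_derive (Derive f) t /\ continuous (Derive (Derive f)) t.

Definition D2 (f : R -> R) (t : R) : R := Derive (Derive f) t.

Definition curve (fy fz : R -> R) (s : R) : pt := (s, fy s, fz s).

Definition Delta0 : R := / 4.

From Stdlib Require Import Reals Lra Psatz.
From Coquelicot Require Import Coquelicot.
Open Scope R_scope.

(* Let X, Y, Z be the components of G along gamma^(n-1), as functions of its parameter t.
   Since gamma^(n) is the graph reparametrization of G o gamma^(n-1), its z-component
   satisfies gamma_z^(n)(X t) = Z t, hence gamma_z^(n)'' X'^2 + gamma_z^(n)' X'' = Z''.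
   As DG is xi-close to diag(-1, 1/lam, lam), X' is close to -1, while Z'' is lam times
   gamma_z'' up to errors bounded by M C^2 (second derivatives of G) and xi |gamma_y''|;
   the two dominance hypotheses on (lam - xi - 1)/4 |gamma_z''| make these errors small,
   so |gamma_z^(n)''| > |gamma_z''|.  The same estimate for the y-component shows that
   the two dominance inequalities hold again for gamma^(n), so the step can be iterated
   along the orbit. *)

Lemma locally_R (u : R) (P : R -> Prop) :
  (exists d, 0 < d /\ forall v, Rabs (v - u) < d -> P v) -> locally u P.
Proof. intros [d [Hd HP]]. exists (mkposreal d Hd). intros v Hv. apply HP, Hv. Qed.

Lemma shift_shift p a h1 h2 : shift (shift p a h1) a h2 = shift p a (h1 + h2).
Proof. destruct p as [[x y] z], a; simpl; now rewrite Rplus_assoc. Qed.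

Lemma shift_0 p a : shift p a 0 = p.
Proof. destruct p as [[x y] z], a; simpl; now rewrite Rplus_0_r. Qed.

Definition has_pderivs (f : pt -> R) : Prop := forall a p, has_pderiv a f p.

Lemma is_derive_pderiv f p a h : has_pderivs f ->
  is_derive (fun s => f (shift p a s)) h (pderiv a f (shift p a h)).
Proof.
  intros Hf.
  assert (Hq : is_derive (fun s => f (shift (shift p a h) a s)) (h - h) (pderiv a f (shift p a h))).
  { rewrite Rminus_diag. apply Derive_correct, Hf. }
  assert (Hsub : is_derive (fun s : R => s - h) h 1) by (auto_derive; auto; ring).
  pose proof (is_derive_comp _ (fun s => s - h) h _ _ Hq Hsub) as Hcomp.
  rewrite <- (Rmult_1_l (pderiv a f (shift p a h))).
  refine (is_derive_ext _ _ _ _ _ Hcomp).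
  intros s; simpl. rewrite shift_shift. do 2 f_equal. ring.
Qed.

Lemma pderiv_MVT f p a h : has_pderivs f ->
  exists c, Rabs c <= Rabs h /\ f (shift p a h) - f p = pderiv a f (shift p a c) * h.
Proof.
  intros Hf.
  destruct (MVT_gen (fun s => f (shift p a s)) 0 h (fun c => pderiv a f (shift p a c)))
    as [c [Hc Hmvt]].
  - intros s _. apply is_derive_pderiv, Hf.
  - intros s _. apply continuity_pt_filterlim.
    apply (ex_derive_continuous (fun s => f (shift p a s))). eexists. apply is_derive_pderiv, Hf.
  - exists c. rewrite shift_0, Rminus_0_r in Hmvt. split; [|exact Hmvt].
    revert Hc. unfold Rmin, Rmax. destruct (Rle_dec 0 h); intros;
      unfold Rabs; destruct (Rcase_abs c), (Rcase_abs h); lra.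
Qed.

Definition continuous_at3 (g : pt -> R) (px py pz : R) : Prop :=
  forall eps, 0 < eps -> exists d, 0 < d /\ forall x y z,
    Rabs (x - px) < d -> Rabs (y - py) < d -> Rabs (z - pz) < d ->
    Rabs (g (x, y, z) - g (px, py, pz)) < eps.

Lemma continuous_at3_of_continuous g px py pz :
  continuous g (px, py, pz) -> continuous_at3 g px py pz.
Proof.
  intros Hg eps Heps.
  destruct (proj1 (filterlim_locally _ _) Hg (mkposreal eps Heps)) as [d Hd].
  exists d. split; [apply cond_pos|]. intros x y z Hx Hy Hz.
  exact (Hd (x, y, z) (conj (conj Hx Hy) Hz)).
Qed.

Lemma continuous_at3_uniform (g : ax -> pt -> R) px py pz :
  (forall a, continuous_at3 (g a) px py pz) ->
  forall eps, 0 < eps -> exists d, 0 < d /\ forall a x y z,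
    Rabs (x - px) < d -> Rabs (y - py) < d -> Rabs (z - pz) < d ->
    Rabs (g a (x, y, z) - g a (px, py, pz)) < eps.
Proof.
  intros Hg eps Heps.
  destruct (Hg AX eps Heps) as [d1 [Hd1 H1]].
  destruct (Hg AY eps Heps) as [d2 [Hd2 H2]].
  destruct (Hg AZ eps Heps) as [d3 [Hd3 H3]].
  exists (Rmin d1 (Rmin d2 d3)). split; [repeat apply Rmin_pos; lra|].
  pose proof (Rmin_l d1 (Rmin d2 d3)). pose proof (Rmin_r d1 (Rmin d2 d3)).
  pose proof (Rmin_l d2 d3). pose proof (Rmin_r d2 d3).
  intros [] x y z Hx Hy Hz; [apply H1|apply H2|apply H3]; lra.
Qed.

Lemma Rabs_lincomb3_le e a1 a2 a3 d1 d2 d3 :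
  Rabs a1 <= e -> Rabs a2 <= e -> Rabs a3 <= e ->
  Rabs (a1 * d1 + a2 * d2 + a3 * d3) <= e * (Rabs d1 + Rabs d2 + Rabs d3).
Proof.
  intros.
  pose proof (Rabs_triang (a1 * d1 + a2 * d2) (a3 * d3)).
  pose proof (Rabs_triang (a1 * d1) (a2 * d2)).
  rewrite !Rabs_mult in *.
  pose proof (Rabs_pos d1); pose proof (Rabs_pos d2); pose proof (Rabs_pos d3).
  nra.
Qed.

(* Continuous partial derivatives make f Frechet differentiable: the increment is
   split along the coordinate segments and each piece is evaluated by the MVT. *)
Lemma pderiv_linear_approx f px py pz :
  has_pderivs f -> (forall a, continuous_at3 (pderiv a f) px py pz) ->
  forall eps, 0 < eps -> exists d, 0 < d /\ forall x y z,
    Rabs (x - px) < d -> Rabs (y - py) < d -> Rabs (z - pz) < d ->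
    Rabs (f (x, y, z) - f (px, py, pz)
          - (pderiv AX f (px, py, pz) * (x - px) + pderiv AY f (px, py, pz) * (y - py)
             + pderiv AZ f (px, py, pz) * (z - pz)))
    <= eps * (Rabs (x - px) + Rabs (y - py) + Rabs (z - pz)).
Proof.
  intros Hf Hc eps Heps.
  destruct (continuous_at3_uniform _ _ _ _ Hc eps Heps) as [d [Hd Hpd]].
  exists d. split; [exact Hd|]. intros x y z Hx Hy Hz.
  destruct (pderiv_MVT f (px, y, z) AX (x - px) Hf) as [c1 [Hc1 E1]].
  destruct (pderiv_MVT f (px, py, z) AY (y - py) Hf) as [c2 [Hc2 E2]].
  destruct (pderiv_MVT f (px, py, pz) AZ (z - pz) Hf) as [c3 [Hc3 E3]].
  simpl in E1, E2, E3.
  replace (px + (x - px)) with x in E1 by ring.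
  replace (py + (y - py)) with y in E2 by ring.
  replace (pz + (z - pz)) with z in E3 by ring.
  assert (Hd0 : Rabs (px - px) < d) by (rewrite Rminus_diag, Rabs_R0; exact Hd).
  assert (Hd0' : Rabs (py - py) < d) by (rewrite Rminus_diag, Rabs_R0; exact Hd).
  assert (K1 := Hpd AX (px + c1) y z ltac:(replace (px + c1 - px) with c1 by ring; lra) Hy Hz).
  assert (K2 := Hpd AY px (py + c2) z Hd0 ltac:(replace (py + c2 - py) with c2 by ring; lra) Hz).
  assert (K3 := Hpd AZ px py (pz + c3) Hd0 Hd0' ltac:(replace (pz + c3 - pz) with c3 by ring; lra)).
  eapply Rle_trans;
    [|exact (Rabs_lincomb3_le _ _ _ _ _ _ _ (Rlt_le _ _ K1) (Rlt_le _ _ K2) (Rlt_le _ _ K3))].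
  right. f_equal. lra.
Qed.

Lemma continuous_at3_of_pderivs f px py pz :
  has_pderivs f -> (forall a, continuous_at3 (pderiv a f) px py pz) ->
  continuous_at3 f px py pz.
Proof.
  intros Hf Hc eps Heps.
  destruct (pderiv_linear_approx f px py pz Hf Hc 1 Rlt_0_1) as [d [Hd Happrox]].
  set (fx := pderiv AX f (px, py, pz)) in *.
  set (fy := pderiv AY f (px, py, pz)) in *.
  set (fz := pderiv AZ f (px, py, pz)) in *.
  pose proof (Rabs_pos fx); pose proof (Rabs_pos fy); pose proof (Rabs_pos fz).
  set (K := Rabs fx + Rabs fy + Rabs fz).
  exists (Rmin d (eps / (3 * (K + 1)))). split.
  { apply Rmin_pos; [lra|]. apply Rdiv_lt_0_compat; unfold K; lra. }
  intros x y z Hx Hy Hz.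
  pose proof (Rmin_l d (eps / (3 * (K + 1)))). pose proof (Rmin_r d (eps / (3 * (K + 1)))).
  specialize (Happrox x y z ltac:(lra) ltac:(lra) ltac:(lra)).
  assert (Hlin := Rabs_lincomb3_le K fx fy fz (x - px) (y - py) (z - pz)
    ltac:(unfold K; lra) ltac:(unfold K; lra) ltac:(unfold K; lra)).
  set (S := Rabs (x - px) + Rabs (y - py) + Rabs (z - pz)) in *.
  assert (HS : (K + 1) * S < eps).
  { replace eps with (3 * (K + 1) * (eps / (3 * (K + 1)))) by (field; unfold K; lra).
    unfold S, K in *. nra. }
  pose proof (Rabs_triang_inv (f (x, y, z) - f (px, py, pz))
    (fx * (x - px) + fy * (y - py) + fz * (z - pz))).
  lra.
Qed.

Lemma is_derive_local_lipschitz (y : R -> R) (u0 l : R) : is_derive y u0 l ->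
  exists K d, 0 <= K /\ 0 < d /\
    forall u, Rabs (u - u0) < d -> Rabs (y u - y u0) <= K * Rabs (u - u0).
Proof.
  intros Hy. apply is_derive_Reals in Hy.
  destruct (Hy 1 Rlt_0_1) as [d Hd].
  exists (Rabs l + 1), d. split; [pose proof (Rabs_pos l); lra|]. split; [apply cond_pos|].
  intros u Hu. destruct (Req_dec u u0) as [->|Hne].
  { rewrite !Rminus_diag, Rabs_R0. lra. }
  assert (Hh : u - u0 <> 0) by lra.
  specialize (Hd (u - u0) Hh Hu). replace (u0 + (u - u0)) with u in Hd by ring.
  pose proof (Rabs_triang_inv ((y u - y u0) / (u - u0)) l).
  replace (y u - y u0) with ((y u - y u0) / (u - u0) * (u - u0)) by (field; exact Hh).
  rewrite Rabs_mult. apply Rmult_le_compat_r; [apply Rabs_pos|lra].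
Qed.

Lemma is_derive_of_small_o (g : R -> R) (u0 : R) : g u0 = 0 ->
  (forall eps, 0 < eps -> exists d, 0 < d /\
     forall u, Rabs (u - u0) < d -> Rabs (g u) <= eps * Rabs (u - u0)) ->
  is_derive g u0 0.
Proof.
  intros Hg0 Hsmall. apply is_derive_Reals. intros eps Heps.
  destruct (Hsmall (eps / 2) ltac:(lra)) as [d [Hd Hg]].
  exists (mkposreal d Hd). intros h Hh Hhd. simpl in Hhd.
  specialize (Hg (u0 + h) ltac:(replace (u0 + h - u0) with h by ring; exact Hhd)).
  replace (u0 + h - u0) with h in Hg by ring.
  rewrite Hg0, Rminus_0_r, Rminus_0_r, Rabs_div by exact Hh.
  apply Rabs_pos_lt in Hh. apply (Rmult_lt_reg_r (Rabs h)); [exact Hh|].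
  unfold Rdiv. rewrite Rmult_assoc, Rinv_l by lra. nra.
Qed.

(* Continuous partials make f differentiable at P, and y, z are Lipschitz at u0. *)
Lemma graph_comp_remainder f (y z : R -> R) (u0 y1 z1 : R) :
  has_pderivs f -> (forall a, continuous_at3 (pderiv a f) u0 (y u0) (z u0)) ->
  is_derive y u0 y1 -> is_derive z u0 z1 ->
  let P := (u0, y u0, z u0) in
  is_derive (fun u => f (u, y u, z u) - f P
    - (pderiv AX f P * (u - u0) + pderiv AY f P * (y u - y u0) + pderiv AZ f P * (z u - z u0)))
    u0 0.
Proof.
  intros Hf Hc Hy Hz P.
  apply is_derive_of_small_o; [rewrite Rminus_diag; ring|]. intros eps Heps.
  destruct (is_derive_local_lipschitz y u0 y1 Hy) as [Ky [dy [HKy [Hdy Hly]]]].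
  destruct (is_derive_local_lipschitz z u0 z1 Hz) as [Kz [dz [HKz [Hdz Hlz]]]].
  set (L := 1 + Ky + Kz).
  assert (HL : 1 <= L) by (unfold L; lra).
  destruct (pderiv_linear_approx f u0 (y u0) (z u0) Hf Hc (eps / L)
    ltac:(apply Rdiv_lt_0_compat; lra)) as [d0 [Hd0 Happrox]].
  exists (Rmin (Rmin dy dz) (d0 / L)). split.
  { repeat apply Rmin_pos; try apply Rdiv_lt_0_compat; lra. }
  intros u Hu.
  pose proof (Rmin_l (Rmin dy dz) (d0 / L)). pose proof (Rmin_r (Rmin dy dz) (d0 / L)).
  pose proof (Rmin_l dy dz). pose proof (Rmin_r dy dz).
  assert (HuL : Rabs (u - u0) * L < d0).
  { apply Rlt_le_trans with (d0 / L * L).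
    - apply Rmult_lt_compat_r; lra.
    - right. field. lra. }
  specialize (Hly u ltac:(lra)). specialize (Hlz u ltac:(lra)).
  pose proof (Rabs_pos (u - u0)).
  assert (Hu0 : Rabs (u - u0) <= Rabs (u - u0) * L) by nra.
  assert (Hy0 : Ky * Rabs (u - u0) <= Rabs (u - u0) * L) by (unfold L in *; nra).
  assert (Hz0 : Kz * Rabs (u - u0) <= Rabs (u - u0) * L) by (unfold L in *; nra).
  specialize (Happrox u (y u) (z u) ltac:(lra) ltac:(lra) ltac:(lra)).
  replace (eps * Rabs (u - u0)) with (eps / L * (L * Rabs (u - u0))) by (field; lra).
  eapply Rle_trans; [exact Happrox|].
  apply Rmult_le_compat_l; [apply Rlt_le, Rdiv_lt_0_compat; lra|].
  unfold L. lra.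
Qed.

Definition graph_slope (f : pt -> R) (p : pt) (y1 z1 : R) : R :=
  pderiv AX f p + pderiv AY f p * y1 + pderiv AZ f p * z1.

Lemma is_derive_graph_comp f (y z : R -> R) (u0 y1 z1 : R) :
  has_pderivs f -> (forall a, continuous_at3 (pderiv a f) u0 (y u0) (z u0)) ->
  is_derive y u0 y1 -> is_derive z u0 z1 ->
  is_derive (fun u => f (u, y u, z u)) u0 (graph_slope f (u0, y u0, z u0) y1 z1).
Proof.
  intros Hf Hc Hy Hz.
  pose proof (graph_comp_remainder f y z u0 y1 z1 Hf Hc Hy Hz) as Hrem. cbv zeta in Hrem.
  set (P := (u0, y u0, z u0)) in *.
  set (lin := fun u => pderiv AX f P * (u - u0) + pderiv AY f P * (y u - y u0)
                        + pderiv AZ f P * (z u - z u0)).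
  assert (Hlin : is_derive lin u0 (graph_slope f P y1 z1)).
  { unfold lin, graph_slope. auto_derive.
    - repeat split; eexists; eassumption.
    - replace (Derive (fun x => y x) u0) with y1 by (symmetry; now apply is_derive_unique).
      replace (Derive (fun x => z x) u0) with z1 by (symmetry; now apply is_derive_unique).
      ring. }
  pose proof (is_derive_plus _ _ _ _ _ Hrem
    (is_derive_plus _ _ _ _ _ (is_derive_const (f P) u0) Hlin)) as Hsum.
  replace (graph_slope f P y1 z1) with (plus 0 (plus zero (graph_slope f P y1 z1)))
    by (unfold plus, zero; simpl; ring).
  eapply is_derive_ext; [|exact Hsum]. intros u. unfold plus, lin; simpl. ring.
Qed.

Lemma C2fun_pderiv_continuous f a px py pz :
  C2fun f -> continuous_at3 (pderiv a f) px py pz.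
Proof.
  intros [_ [H2 H3]]. apply continuous_at3_of_pderivs.
  - intros b p. apply H2.
  - intros b. apply continuous_at3_of_continuous, H3.
Qed.

Lemma is_derive_graph_comp_C2 f (y z : R -> R) (u : R) :
  C2fun f -> ex_derive y u -> ex_derive z u ->
  is_derive (fun u => f (u, y u, z u)) u
    (graph_slope f (u, y u, z u) (Derive y u) (Derive z u)).
Proof.
  intros Hf Hy Hz. apply is_derive_graph_comp.
  - exact (proj1 Hf).
  - intros a. now apply C2fun_pderiv_continuous.
  - now apply Derive_correct.
  - now apply Derive_correct.
Qed.

(* The Hessian of f at p evaluated twice on the vector (1, y1, z1). *)
Definition graph_hessian (f : pt -> R) (p : pt) (y1 z1 : R) : R :=
  graph_slope (pderiv AX f) p y1 z1 + graph_slope (pderiv AY f) p y1 z1 * y1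
  + graph_slope (pderiv AZ f) p y1 z1 * z1.

Definition graph_curvature (f : pt -> R) (y z : R -> R) (u : R) : R :=
  let P := (u, y u, z u) in
  graph_hessian f P (Derive y u) (Derive z u) + pderiv AY f P * D2 y u + pderiv AZ f P * D2 z u.

Lemma is_derive2_graph_comp f (y z : R -> R) (u0 : R) :
  C2fun f -> locally u0 (fun u => ex_derive y u /\ ex_derive z u) ->
  ex_derive (Derive y) u0 -> ex_derive (Derive z) u0 ->
  is_derive (Derive (fun u => f (u, y u, z u))) u0 (graph_curvature f y z u0).
Proof.
  intros Hf Hloc Hy2 Hz2. unfold graph_curvature.
  set (P := (u0, y u0, z u0)).
  destruct (locally_singleton _ _ Hloc) as [Hy1 Hz1].
  assert (Hb : forall b, is_derive (fun u => pderiv b f (u, y u, z u)) u0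
                           (graph_slope (pderiv b f) P (Derive y u0) (Derive z u0))).
  { intros b. destruct Hf as [_ [H2 H3]]. apply is_derive_graph_comp.
    - intros a p. apply H2.
    - intros a. apply continuous_at3_of_continuous, H3.
    - now apply Derive_correct.
    - now apply Derive_correct. }
  pose proof (is_derive_mult _ _ _ _ _ (Hb AY) (Derive_correct _ _ Hy2) Rmult_comm) as Hmy.
  pose proof (is_derive_mult _ _ _ _ _ (Hb AZ) (Derive_correct _ _ Hz2) Rmult_comm) as Hmz.
  pose proof (is_derive_plus _ _ _ _ _ (is_derive_plus _ _ _ _ _ (Hb AX) Hmy) Hmz) as Hsum.
  unfold plus, mult in Hsum; simpl in Hsum.
  replace (graph_hessian f P (Derive y u0) (Derive z u0) + pderiv AY f P * D2 y u0
           + pderiv AZ f P * D2 z u0)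
    with (graph_slope (pderiv AX f) P (Derive y u0) (Derive z u0)
          + (graph_slope (pderiv AY f) P (Derive y u0) (Derive z u0) * Derive y u0
             + pderiv AY f P * Derive (Derive y) u0)
          + (graph_slope (pderiv AZ f) P (Derive y u0) (Derive z u0) * Derive z u0
             + pderiv AZ f P * Derive (Derive z) u0))
    by (unfold graph_hessian, D2; ring).
  refine (is_derive_ext_loc _ _ _ _ _ Hsum).
  eapply filter_imp; [|exact Hloc]. intros u [Hyu Hzu]. symmetry.
  apply is_derive_unique. exact (is_derive_graph_comp_C2 f y z u Hf Hyu Hzu).
Qed.

Lemma D2_comp (X Z W : R -> R) (u0 : R) :
  locally u0 (fun u => W (X u) = Z u /\ ex_derive X u /\ ex_derive W (X u)) ->
  ex_derive (Derive X) u0 -> ex_derive (Derive W) (X u0) ->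
  D2 Z u0 = D2 W (X u0) * Derive X u0 ^ 2 + Derive W (X u0) * D2 X u0.
Proof.
  intros Hloc HX2 HW2.
  assert (HZ1 : locally u0 (fun u => Derive W (X u) * Derive X u = Derive Z u)).
  { eapply filter_imp; [|exact (locally_locally _ _ Hloc)]. intros u Hu.
    destruct (locally_singleton _ _ Hu) as [_ [HXu HWu]].
    symmetry. apply is_derive_unique.
    pose proof (is_derive_comp _ _ _ _ _ (Derive_correct _ _ HWu) (Derive_correct _ _ HXu)) as Hc.
    unfold scal in Hc; simpl in Hc; unfold mult in Hc; simpl in Hc.
    rewrite Rmult_comm. refine (is_derive_ext_loc _ _ _ _ _ Hc).
    eapply filter_imp; [|exact Hu]. intros v Hv. apply Hv. }
  destruct (locally_singleton _ _ Hloc) as [_ [HX1 _]].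
  unfold D2. rewrite <- (Derive_ext_loc _ _ _ HZ1). apply is_derive_unique.
  pose proof (is_derive_comp _ _ _ _ _ (Derive_correct _ _ HW2) (Derive_correct _ _ HX1)) as Hc.
  pose proof (is_derive_mult _ _ _ _ _ Hc (Derive_correct _ _ HX2) Rmult_comm) as Hm.
  unfold plus, mult, scal in Hm; simpl in Hm; unfold mult in Hm; simpl in Hm.
  replace (Derive (Derive W) (X u0) * Derive X u0 ^ 2 + Derive W (X u0) * Derive (Derive X) u0)
    with (Derive X u0 * Derive (Derive W) (X u0) * Derive X u0
          + Derive W (X u0) * Derive (Derive X) u0) by ring.
  exact Hm.
Qed.

Lemma lam_bounds : 1.618 < lam < 1.6181 /\ 0.618 < / lam < 0.6181.
Proof.
  assert (S1 : 2.236 < sqrt 5).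
  { rewrite <- (sqrt_square 2.236) by lra. apply sqrt_lt_1; lra. }
  assert (S2 : sqrt 5 < 2.2362).
  { rewrite <- (sqrt_square 2.2362) by lra. apply sqrt_lt_1; lra. }
  assert (L : 1.618 < lam < 1.6181) by (unfold lam; lra).
  split; [exact L|].
  split; apply (Rmult_lt_reg_l lam); try lra; rewrite Rinv_r by lra; nra.
Qed.

Lemma Rabs_affine2_le c p1 p2 e1 e2 v1 v2 :
  Rabs p1 <= e1 -> Rabs p2 <= e2 ->
  Rabs (c + p1 * v1 + p2 * v2) <= Rabs c + e1 * Rabs v1 + e2 * Rabs v2.
Proof.
  intros H1 H2.
  pose proof (Rabs_triang (c + p1 * v1) (p2 * v2)).
  pose proof (Rabs_triang c (p1 * v1)).
  rewrite !Rabs_mult in *.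
  pose proof (Rabs_pos v1). pose proof (Rabs_pos v2).
  nra.
Qed.

Lemma curvature_z_grows (xi M c X1 X2 Z1 Z2 Qz dzy dzz y2 z2 : R) :
  0 < xi < 0.01 -> 0 <= M * c -> Rabs (X1 + 1) < 0.01 ->
  Rabs X2 <= M * c + xi * Rabs y2 + xi * Rabs z2 -> Rabs Z1 < / 4 ->
  Rabs Qz <= M * c -> Rabs dzy < xi -> Rabs (dzz - lam) < xi ->
  (lam - xi - 1) / 4 * Rabs z2 > 3 * M * c ->
  (lam - xi - 1) / 4 * Rabs z2 > xi * Rabs y2 ->
  Z2 * X1 ^ 2 + Z1 * X2 = Qz + dzy * y2 + dzz * z2 ->
  Rabs Z2 > Rabs z2.
Proof.
  intros Hxi Hq HX1 HX2 HZ1 HQz Hdzy Hdzz Hbig Hdom Heq.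
  destruct lam_bounds as [Hlam _].
  replace (3 * M * c) with (3 * (M * c)) in Hbig by ring.
  set (A := Rabs z2) in *. set (B := Rabs y2) in *. set (q := M * c) in *.
  pose proof (Rabs_pos y2). pose proof (Rabs_pos Z1). pose proof (Rabs_pos X2).
  assert (Hk : 0.15 < (lam - xi - 1) / 4) by lra.
  assert (HA : 0 < A) by nra.
  assert (HX1sq : X1 ^ 2 < 1.0201) by (apply Rabs_def2 in HX1; nra).
  assert (Hrhs : (lam - xi) * A - xi * B - q <= Rabs (Qz + dzy * y2 + dzz * z2)).
  { pose proof (Rabs_triang_inv (dzz * z2) (- (Qz + dzy * y2))).
    pose proof (Rabs_triang Qz (dzy * y2)).
    pose proof (Rabs_triang_inv lam (lam - dzz)).
    rewrite Rabs_Ropp in *. rewrite !Rabs_mult in *.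
    rewrite Rabs_minus_sym in Hdzz. replace (lam - (lam - dzz)) with dzz in * by ring.
    rewrite (Rabs_right lam) in * by lra.
    replace (dzz * z2 - - (Qz + dzy * y2)) with (Qz + dzy * y2 + dzz * z2) in * by ring.
    unfold A, B in *. nra. }
  assert (Hlhs : Rabs (Z2 * X1 ^ 2 + Z1 * X2) <= Rabs Z2 * X1 ^ 2 + / 4 * Rabs X2).
  { pose proof (Rabs_triang (Z2 * X1 ^ 2) (Z1 * X2)).
    rewrite !Rabs_mult, <- RPow_abs, pow2_abs in *. nra. }
  rewrite Heq in Hlhs.
  nra.
Qed.

Lemma curvature_y_small (xi C0 M c X1 X2 Y1 Y2 Qy dyy dyz y2 z2 : R) :
  0 < xi -> xi * (1 + C0) < 0.01 -> 0 <= M * c -> Rabs (X1 + 1) < 0.01 ->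
  Rabs X2 <= M * c + xi * Rabs y2 + xi * Rabs z2 -> Rabs Y1 < C0 ->
  Rabs Qy <= M * c -> Rabs (dyy - / lam) < xi -> Rabs dyz < xi ->
  (lam - xi - 1) / 4 * Rabs z2 > 3 * M * c ->
  (lam - xi - 1) / 4 * Rabs z2 > xi * Rabs y2 ->
  Y2 * X1 ^ 2 + Y1 * X2 = Qy + dyy * y2 + dyz * z2 ->
  xi * Rabs Y2 < (lam - xi - 1) / 4 * Rabs z2.
Proof.
  intros Hxi Hs Hq HX1 HX2 HY1 HQy Hdyy Hdyz Hbig Hdom Heq.
  destruct lam_bounds as [Hlam Hilam].
  replace (3 * M * c) with (3 * (M * c)) in Hbig by ring.
  pose proof (Rabs_pos Y1).
  assert (Hxi1 : xi < 0.01) by nra.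
  pose proof (Rabs_pos X2). pose proof (Rabs_pos Y2).
  pose proof (Rabs_pos y2). pose proof (Rabs_pos z2).
  set (k := (lam - xi - 1) / 4) in *. set (A := Rabs z2) in *. set (B := Rabs y2) in *.
  set (q := M * c) in *. set (s := xi * (1 + C0)) in *.
  assert (Hk : 0.15 < k) by (unfold k; lra).
  assert (HX1sq : 0.98 < X1 ^ 2) by (apply Rabs_def2 in HX1; nra).
  assert (Hdyy' : Rabs dyy < / lam + xi).
  { pose proof (Rabs_triang (dyy - / lam) (/ lam)). rewrite (Rabs_right (/ lam)) in * by lra.
    replace (dyy - / lam + / lam) with dyy in * by ring. lra. }
  assert (Hrhs := Rabs_affine2_le Qy dyy dyz (/ lam + xi) xi y2 z2 ltac:(lra) ltac:(lra)).
  assert (Hlhs : Rabs Y2 * X1 ^ 2 <= q + (/ lam + xi) * B + xi * A + C0 * Rabs X2).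
  { pose proof (Rabs_triang_inv (Y2 * X1 ^ 2) (- (Y1 * X2))).
    rewrite Rabs_Ropp, !Rabs_mult, <- RPow_abs, pow2_abs in *.
    replace (Y2 * X1 ^ 2 - - (Y1 * X2)) with (Qy + dyy * y2 + dyz * z2) in *
      by (rewrite <- Heq; ring).
    unfold A, B in *. nra. }
  assert (Hexpand : xi * (Rabs Y2 * X1 ^ 2)
                    <= s * q + / lam * (xi * B) + s * (xi * B) + s * (xi * A)).
  { eapply Rle_trans; [apply Rmult_le_compat_l; [lra|exact Hlhs]|].
    assert (C0 * Rabs X2 <= C0 * (q + xi * B + xi * A)) by (apply Rmult_le_compat_l; lra).
    unfold s. nra. }
  assert (Hs0 : 0 <= s) by (unfold s; nra).
  assert (HkA : 0 <= k * A) by nra.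
  assert (HxiA : xi * A <= 0.07 * (k * A)) by nra.
  assert (HxiB : 0 <= xi * B) by nra.
  assert (s * q <= 0.01 * (k * A / 3)) by (apply Rmult_le_compat; lra).
  assert (/ lam * (xi * B) <= 0.6181 * (k * A)) by (apply Rmult_le_compat; lra).
  assert (s * (xi * B) <= 0.01 * (k * A)) by (apply Rmult_le_compat; lra).
  assert (s * (xi * A) <= 0.01 * (0.07 * (k * A))) by (apply Rmult_le_compat; nra).
  assert (0.98 * (xi * Rabs Y2) <= xi * (Rabs Y2 * X1 ^ 2)).
  { replace (xi * (Rabs Y2 * X1 ^ 2)) with (X1 ^ 2 * (xi * Rabs Y2)) by ring.
    apply Rmult_le_compat_r; nra. }
  lra.
Qed.

Lemma D2_graph_image (gX g : pt -> R) (y z W : R -> R) (u0 : R) :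
  C2fun gX -> C2fun g ->
  locally u0 (fun u => ex_derive y u /\ ex_derive z u /\
    W (gX (u, y u, z u)) = g (u, y u, z u) /\ ex_derive W (gX (u, y u, z u))) ->
  ex_derive (Derive y) u0 -> ex_derive (Derive z) u0 ->
  ex_derive (Derive W) (gX (u0, y u0, z u0)) ->
  let P := (u0, y u0, z u0) in
  D2 W (gX P) * graph_slope gX P (Derive y u0) (Derive z u0) ^ 2
  + Derive W (gX P) * graph_curvature gX y z u0 = graph_curvature g y z u0.
Proof.
  intros HgX Hg Hloc Hy2 Hz2 HW2; cbv zeta.
  assert (Hyz : locally u0 (fun u => ex_derive y u /\ ex_derive z u)).
  { eapply filter_imp; [|exact Hloc]. intros u [Hy [Hz _]]. now split. }
  assert (HX2 := is_derive2_graph_comp gX y z u0 HgX Hyz Hy2 Hz2).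
  destruct (locally_singleton _ _ Hyz) as [Hy1 Hz1].
  rewrite <- (is_derive_unique _ _ _ (is_derive_graph_comp_C2 gX y z u0 HgX Hy1 Hz1)).
  rewrite <- (is_derive_unique _ _ _ HX2),
    <- (is_derive_unique _ _ _ (is_derive2_graph_comp g y z u0 Hg Hyz Hy2 Hz2)).
  symmetry. apply (D2_comp (fun u => gX (u, y u, z u))).
  - eapply filter_imp; [|exact Hloc]. intros u [Hy [Hz [HW HWd]]].
    repeat split; [exact HW| |exact HWd].
    eexists. exact (is_derive_graph_comp_C2 gX y z u HgX Hy Hz).
  - eexists. exact HX2.
  - exact HW2.
Qed.

Lemma Rabs_le_norm3 u v w :
  Rabs u <= norm3 u v w /\ Rabs v <= norm3 u v w /\ Rabs w <= norm3 u v w.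
Proof.
  unfold norm3. rewrite <- !sqrt_Rsqr_abs.
  repeat split; apply sqrt_le_1_alt; unfold Rsqr; simpl; nra.
Qed.

Definition component (G : pt -> pt) (a : ax) : pt -> R := fun q => coord a (G q).

Lemma hess_bound_entries M G a p b c :
  hess_bound M G -> Rabs (pderiv c (pderiv b (component G a)) p) <= M.
Proof.
  intros H. specialize (H a b p); simpl in H.
  set (g := pderiv b (component G a)).
  destruct (Rabs_le_norm3 (pderiv AX g p) (pderiv AY g p) (pderiv AZ g p)) as [Hx [Hy Hz]].
  destruct c; unfold g, component in *; lra.
Qed.

Lemma Rabs_graph_slope_le f p M y1 z1 :
  (forall a, Rabs (pderiv a f p) <= M) ->
  Rabs (graph_slope f p y1 z1) <= M * (1 + Rabs y1 + Rabs z1).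
Proof.
  intros H. eapply Rle_trans; [apply Rabs_affine2_le; apply H|].
  specialize (H AX). lra.
Qed.

Lemma Rabs_graph_hessian_le f p M y1 z1 :
  (forall a b, Rabs (pderiv a (pderiv b f) p) <= M) ->
  Rabs (graph_hessian f p y1 z1) <= M * (1 + Rabs y1 + Rabs z1) ^ 2.
Proof.
  intros H. unfold graph_hessian.
  eapply Rle_trans; [apply Rabs_affine2_le; apply Rabs_graph_slope_le; intros a; apply H|].
  assert (Rabs (graph_slope (pderiv AX f) p y1 z1) <= M * (1 + Rabs y1 + Rabs z1))
    by (apply Rabs_graph_slope_le; intros a; apply H).
  simpl. lra.
Qed.

Lemma C1_close_jacobian xi G p : C1_close xi G ->
  Rabs (pderiv AX (component G AX) p + 1) < xi /\
  Rabs (pderiv AY (component G AX) p) < xi /\ Rabs (pderiv AZ (component G AX) p) < xi /\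
  Rabs (pderiv AY (component G AY) p - / lam) < xi /\ Rabs (pderiv AZ (component G AY) p) < xi /\
  Rabs (pderiv AY (component G AZ) p) < xi /\ Rabs (pderiv AZ (component G AZ) p - lam) < xi.
Proof.
  intros H. destruct (H p) as [_ Hd]. unfold component.
  pose proof (Hd AX AX). pose proof (Hd AX AY). pose proof (Hd AX AZ).
  pose proof (Hd AY AY). pose proof (Hd AY AZ). pose proof (Hd AZ AY). pose proof (Hd AZ AZ).
  simpl DG0_entry in *. rewrite !Rminus_0_r in *.
  replace (pderiv AX (fun q => coord AX (G q)) p + 1)
    with (pderiv AX (fun q => coord AX (G q)) p - -1) by ring.
  repeat split; assumption.
Qed.

Lemma slope_near_minus_one xi C0 dxx dxy dxz y1 z1 :
  0 < xi -> xi * (1 + C0 + Delta0) < 0.01 ->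
  Rabs (dxx + 1) < xi -> Rabs dxy < xi -> Rabs dxz < xi ->
  Rabs y1 < C0 -> Rabs z1 < Delta0 ->
  Rabs (dxx + dxy * y1 + dxz * z1 + 1) < 0.01.
Proof.
  intros Hxi HxiC Hxx Hxy Hxz Hy1 Hz1.
  replace (dxx + dxy * y1 + dxz * z1 + 1) with ((dxx + 1) + dxy * y1 + dxz * z1) by ring.
  eapply Rle_lt_trans; [apply (Rabs_affine2_le _ _ _ xi xi); lra|].
  assert (xi * Rabs y1 <= xi * C0) by (apply Rmult_le_compat_l; lra).
  assert (xi * Rabs z1 <= xi * Delta0) by (apply Rmult_le_compat_l; lra).
  lra.
Qed.

Lemma graph_hessian_component_le M G a p C0 y1 z1 :
  hess_bound M G -> 0 <= M -> Rabs y1 < C0 -> Rabs z1 < Delta0 ->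
  Rabs (graph_hessian (component G a) p y1 z1) <= M * (1 + C0 + Delta0) ^ 2.
Proof.
  intros H HM Hy1 Hz1.
  eapply Rle_trans; [apply Rabs_graph_hessian_le; intros b c; apply hess_bound_entries, H|].
  apply Rmult_le_compat_l; [exact HM|].
  pose proof (Rabs_pos y1). pose proof (Rabs_pos z1).
  apply pow_incr. lra.
Qed.

Lemma image_graph_curvatures (G : pt -> pt) (y z Y Z : R -> R) (u0 : R) :
  C2map G ->
  let X u := coord AX (G (curve y z u)) in
  locally u0 (fun u => ex_derive y u /\ ex_derive z u /\
    G (curve y z u) = curve Y Z (X u) /\ ex_derive Y (X u) /\ ex_derive Z (X u)) ->
  ex_derive (Derive y) u0 -> ex_derive (Derive z) u0 ->
  ex_derive (Derive Y) (X u0) -> ex_derive (Derive Z) (X u0) ->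
  let X1 := graph_slope (component G AX) (u0, y u0, z u0) (Derive y u0) (Derive z u0) in
  let X2 := graph_curvature (component G AX) y z u0 in
  D2 Y (X u0) * X1 ^ 2 + Derive Y (X u0) * X2 = graph_curvature (component G AY) y z u0 /\
  D2 Z (X u0) * X1 ^ 2 + Derive Z (X u0) * X2 = graph_curvature (component G AZ) y z u0.
Proof.
  intros HG X Hloc Hy2 Hz2 HY2 HZ2 X1 X2.
  assert (Hrel : locally u0 (fun u => ex_derive y u /\ ex_derive z u /\
      Y (X u) = component G AY (u, y u, z u) /\ Z (X u) = component G AZ (u, y u, z u) /\
      ex_derive Y (X u) /\ ex_derive Z (X u))).
  { eapply filter_imp; [|exact Hloc]. intros u [Hy [Hz [Hcurve [HYd HZd]]]].
    unfold component. change (u, y u, z u) with (curve y z u). rewrite Hcurve.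
    repeat split; assumption. }
  split.
  - refine (D2_graph_image _ _ y z Y u0 (HG AX) (HG AY) _ Hy2 Hz2 HY2).
    eapply filter_imp; [|exact Hrel]. intros u [? [? [? [_ [? _]]]]]. now repeat split.
  - refine (D2_graph_image _ _ y z Z u0 (HG AX) (HG AZ) _ Hy2 Hz2 HZ2).
    eapply filter_imp; [|exact Hrel]. intros u [? [? [_ [? [_ ?]]]]]. now repeat split.
Qed.

Definition curvature_dominant (xi M C0 : R) (y z : R -> R) (u : R) : Prop :=
  (lam - xi - 1) / 4 * Rabs (D2 z u) > 3 * M * (1 + C0 + Delta0) ^ 2 /\
  (lam - xi - 1) / 4 * Rabs (D2 z u) > xi * Rabs (D2 y u).

Lemma curvature_step (G : pt -> pt) xi M C0 (y z Y Z : R -> R) (u0 : R) :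
  C2map G -> hess_bound M G -> C1_close xi G ->
  0 < xi -> 0 < M -> xi * (1 + C0 + Delta0) < 0.01 ->
  let X u := coord AX (G (curve y z u)) in
  locally u0 (fun u => ex_derive y u /\ ex_derive z u /\
    G (curve y z u) = curve Y Z (X u) /\ ex_derive Y (X u) /\ ex_derive Z (X u)) ->
  ex_derive (Derive y) u0 -> ex_derive (Derive z) u0 ->
  ex_derive (Derive Y) (X u0) -> ex_derive (Derive Z) (X u0) ->
  Rabs (Derive y u0) < C0 -> Rabs (Derive z u0) < Delta0 ->
  Rabs (Derive Y (X u0)) < C0 -> Rabs (Derive Z (X u0)) < Delta0 ->
  curvature_dominant xi M C0 y z u0 ->
  Rabs (D2 Z (X u0)) > Rabs (D2 z u0) /\ curvature_dominant xi M C0 Y Z (X u0).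
Proof.
  intros HG Hhess Hclose Hxi HM HxiC X Hloc Hy2 Hz2 HY2 HZ2 Hy1 Hz1 HY1 HZ1 [Hbig Hdom].
  assert (HC0 : 0 < C0) by (pose proof (Rabs_pos (Derive y u0)); lra).
  assert (Hxi1 : xi < 0.01) by (unfold Delta0 in HxiC; nra).
  set (c := (1 + C0 + Delta0) ^ 2) in *.
  assert (Hc : 0 <= M * c) by (unfold c; apply Rmult_le_pos; [lra|apply pow2_ge_0]).
  destruct (image_graph_curvatures G y z Y Z u0 HG Hloc Hy2 Hz2 HY2 HZ2) as [EY EZ].
  set (P := (u0, y u0, z u0)) in *.
  destruct (C1_close_jacobian xi G P Hclose) as [Jxx [Jxy [Jxz [Jyy [Jyz [Jzy Jzz]]]]]].
  pose proof (graph_hessian_component_le M G AX P C0 _ _ Hhess (Rlt_le _ _ HM) Hy1 Hz1) as QX.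
  pose proof (graph_hessian_component_le M G AY P C0 _ _ Hhess (Rlt_le _ _ HM) Hy1 Hz1) as QY.
  pose proof (graph_hessian_component_le M G AZ P C0 _ _ Hhess (Rlt_le _ _ HM) Hy1 Hz1) as QZ.
  fold c in QX, QY, QZ.
  pose proof (slope_near_minus_one xi C0 _ _ _ _ _ Hxi HxiC Jxx Jxy Jxz Hy1 Hz1) as HX1.
  assert (HX2 : Rabs (graph_curvature (component G AX) y z u0)
                <= M * c + xi * Rabs (D2 y u0) + xi * Rabs (D2 z u0)).
  { unfold graph_curvature; cbv zeta; fold P.
    eapply Rle_trans; [apply (Rabs_affine2_le _ _ _ xi xi); lra|]. lra. }
  assert (HZ := curvature_z_grows xi M c _ _ _ _ _ _ _ _ _ (conj Hxi Hxi1) Hc HX1 HX2 HZ1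
    QZ Jzy Jzz Hbig Hdom EZ).
  assert (HY := curvature_y_small xi C0 M c _ _ _ _ _ _ _ _ _ Hxi ltac:(unfold Delta0 in HxiC; nra)
    Hc HX1 HX2 HY1 QY Jyy Jyz Hbig Hdom EY).
  assert (Hk : 0 < (lam - xi - 1) / 4) by (destruct lam_bounds; lra).
  change (coord AX (G (curve y z u0))) with (X u0) in HZ, HY.
  split; [exact HZ|]. unfold curvature_dominant. fold c.
  assert (Hgrow := Rmult_lt_compat_l _ _ _ Hk HZ).
  split; lra.
Qed.

Lemma IVT_strict (f : R -> R) x y v : x < y ->
  (forall t, x <= t <= y -> continuity_pt f t) ->
  f x < v < f y \/ f y < v < f x -> exists t, x <= t <= y /\ f t = v.
Proof.
  intros Hxy Hf [Hv|Hv].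
  - destruct (Ranalysis5.IVT_interv (fun t => f t - v) x y) as [t [Ht Hft]]; try lra.
    + intros t Ht. apply continuity_pt_minus; [now apply Hf|]. now apply continuity_pt_const.
    + exists t. split; [exact Ht|lra].
  - destruct (Ranalysis5.IVT_interv (fun t => v - f t) x y) as [t [Ht Hft]]; try lra.
    + intros t Ht. apply continuity_pt_minus; [now apply continuity_pt_const|]. now apply Hf.
    + exists t. split; [exact Ht|lra].
Qed.

Lemma is_derive_sign_nearby (f : R -> R) (t0 L : R) : is_derive f t0 L -> L <> 0 ->
  forall d, 0 < d -> exists h, 0 < h < d /\
    0 < (f (t0 + h) - f t0) * L /\ (f (t0 - h) - f t0) * L < 0.
Proof.
  intros Hf HL d Hd. apply is_derive_Reals in Hf.
  assert (HL2 : 0 < Rabs L / 2) by (apply Rabs_pos_lt in HL; lra).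
  destruct (Hf _ HL2) as [delta Hdelta].
  pose proof (cond_pos delta).
  set (h := Rmin (delta / 2) (d / 2)).
  assert (Hh : 0 < h < d) by (unfold h; pose proof (Rmin_r (delta / 2) (d / 2)); split;
    [apply Rmin_pos|]; lra).
  assert (Hhd : h < delta) by (unfold h; pose proof (Rmin_l (delta / 2) (d / 2)); lra).
  assert (Hsign : forall q, Rabs (q - L) < Rabs L / 2 -> 0 < q * L).
  { intros q Hq. destruct (Rdichotomy _ _ HL).
    - rewrite (Rabs_left L) in Hq by lra. apply Rabs_def2 in Hq. nra.
    - rewrite (Rabs_right L) in Hq by lra. apply Rabs_def2 in Hq. nra. }
  pose proof (Hsign _ (Hdelta h ltac:(lra) ltac:(rewrite Rabs_right; lra))) as Hp.
  pose proof (Hsign _ (Hdelta (- h) ltac:(lra) ltac:(rewrite Rabs_Ropp, Rabs_right; lra))) as Hm.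
  exists h. split; [exact Hh|]. split.
  - replace (f (t0 + h) - f t0) with ((f (t0 + h) - f t0) / h * h) by (field; lra). nra.
  - replace (f (t0 - h) - f t0) with (- ((f (t0 + - h) - f t0) / - h * h))
      by (unfold Rminus; field; lra).
    nra.
Qed.

Lemma image_is_nbhd (f : R -> R) a b t0 : a < t0 < b ->
  (forall t, a < t < b -> ex_derive f t) -> Derive f t0 <> 0 ->
  locally (f t0) (fun v => exists t, a < t < b /\ v = f t).
Proof.
  intros Ht0 Hf HL.
  destruct (is_derive_sign_nearby f t0 _ (Derive_correct _ _ (Hf t0 Ht0)) HL
    (Rmin (t0 - a) (b - t0))
    ltac:(apply Rmin_pos; lra)) as [h [Hh [Hp Hm]]].
  pose proof (Rmin_l (t0 - a) (b - t0)). pose proof (Rmin_r (t0 - a) (b - t0)).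
  set (L := Derive f t0) in *.
  set (ep := f (t0 + h) - f t0) in *. set (em := f (t0 - h) - f t0) in *.
  apply locally_R. exists (Rmin (Rabs ep) (Rabs em)).
  split; [apply Rmin_pos; apply Rabs_pos_lt; intros E; rewrite E in *; lra|].
  intros v Hv.
  pose proof (Rmin_l (Rabs ep) (Rabs em)). pose proof (Rmin_r (Rabs ep) (Rabs em)).
  destruct (IVT_strict f (t0 - h) (t0 + h) v) as [t [Ht Hft]].
  - lra.
  - intros t Ht. apply continuity_pt_filterlim, (ex_derive_continuous f), Hf. lra.
  - apply Rabs_def2 in Hv. destruct (Rdichotomy _ _ HL).
    + assert (ep < 0) by (apply (Rmult_lt_reg_r (- L)); lra).
      assert (0 < em) by (apply (Rmult_lt_reg_r (- L)); lra).
      rewrite (Rabs_left ep), (Rabs_right em) in * by lra.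
      right. unfold ep, em in *. lra.
    + assert (0 < ep) by (apply (Rmult_lt_reg_r L); lra).
      assert (em < 0) by (apply (Rmult_lt_reg_r L); lra).
      rewrite (Rabs_right ep), (Rabs_left em) in * by lra.
      left. unfold ep, em in *. lra.
  - exists t. split; [lra|auto].
Qed.

Section Orbit.

Variables (G : pt -> pt) (xi M C0 a b : R) (gy gz : nat -> R -> R) (xn : nat -> R -> R) (m : nat).
Hypotheses (HG : C2map G) (Hhess : hess_bound M G) (Hclose : C1_close xi G)
  (Hxi : 0 < xi) (HM : 0 < M) (HxiC : xi * (1 + C0 + Delta0) < 0.01).

Let J (k : nat) (s : R) : Prop := exists t, a < t < b /\ s = xn k t.

Hypothesis orbit_step : forall k t, (k < m)%nat -> a < t < b ->
  G (curve (gy k) (gz k) (xn k t)) = curve (gy (S k)) (gz (S k)) (xn (S k) t).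
Hypothesis level_bounds : forall k s, (k <= m)%nat -> J k s ->
  C2_at (gy k) s /\ C2_at (gz k) s /\
  Rabs (Derive (gy k) s) < C0 /\ Rabs (Derive (gz k) s) < Delta0.
Hypothesis level_open : forall k s, (k <= m)%nat -> J k s -> locally s (J k).
Hypothesis level0_dominant : forall t, a < t < b ->
  curvature_dominant xi M C0 (gy 0%nat) (gz 0%nat) (xn 0%nat t).

Lemma orbit_curvature_step k t : (k < m)%nat -> a < t < b ->
  curvature_dominant xi M C0 (gy k) (gz k) (xn k t) ->
  Rabs (D2 (gz (S k)) (xn (S k) t)) > Rabs (D2 (gz k) (xn k t)) /\
  curvature_dominant xi M C0 (gy (S k)) (gz (S k)) (xn (S k) t).
Proof.
  intros Hk Ht Hdom.
  assert (HJ : forall t', a < t' < b -> J k (xn k t')) by (intros t' Ht'; now exists t').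
  assert (HJ' : J (S k) (xn (S k) t)) by now exists t.
  destruct (level_bounds k _ ltac:(lia) (HJ t Ht)) as [[_ [Hy2 _]] [[_ [Hz2 _]] [Hy1 Hz1]]].
  destruct (level_bounds (S k) _ Hk HJ') as [[_ [HY2 _]] [[_ [HZ2 _]] [HY1 HZ1]]].
  replace (xn (S k) t) with (coord AX (G (curve (gy k) (gz k) (xn k t)))) in *
    by now rewrite orbit_step.
  apply (curvature_step G xi M C0); auto.
  eapply filter_imp; [|exact (level_open k _ ltac:(lia) (HJ t Ht))]. intros v [t' [Ht' ->]].
  rewrite orbit_step by assumption.
  destruct (level_bounds k _ ltac:(lia) (HJ t' Ht')) as [[Hy _] [[Hz _] _]].
  destruct (level_bounds (S k) (xn (S k) t') Hk ltac:(now exists t')) as [[HY _] [[HZ _] _]].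
  repeat split; assumption.
Qed.

Lemma orbit_curvature_dominant k t : (k < m)%nat -> a < t < b ->
  curvature_dominant xi M C0 (gy k) (gz k) (xn k t).
Proof.
  intros Hk Ht. induction k as [|k IH]; [now apply level0_dominant|].
  exact (proj2 (orbit_curvature_step k t ltac:(lia) Ht (IH ltac:(lia)))).
Qed.

Lemma orbit_curvature_grows k t : (k < m)%nat -> a < t < b ->
  Rabs (D2 (gz (S k)) (xn (S k) t)) > Rabs (D2 (gz k) (xn k t)).
Proof.
  intros Hk Ht. exact (proj1 (orbit_curvature_step k t Hk Ht (orbit_curvature_dominant k t Hk Ht))).
Qed.

End Orbit.

(* gy n, gz n : components of gamma^(n) (parameter = x-coordinate);
   gamma = gamma^(0) = curve (gy 0) (gz 0) is defined on the open interval ]a,b[;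
   xn n t = x-coordinate of G^n(gamma t); gamma^(n) is defined on
   J_n = { xn n t | a < t < b }. *)
Theorem lemma2p7 :
  forall C0 : R, 0 < C0 ->
  exists xi0 : R, 0 < xi0 /\
  forall (xi Delta : R), 0 < xi < xi0 -> 0 < Delta < Delta0 ->
  forall M : R, 0 < M ->
  forall G : pt -> pt,
    C2diffeo G -> hess_bound M G -> C1_close xi G ->
  forall (a b : R) (gy gz : nat -> R -> R) (m : nat),
    let C := 1 + C0 + Delta0 in
    let xn := fun (n : nat) (t : R) => coord AX (Nat.iter n G (curve (gy 0%nat) (gz 0%nat) t)) in
    let J := fun (n : nat) (s : R) => exists t, a < t < b /\ s = xn n t in
    (* hypotheses on gamma *)
    (forall t, a < t < b ->
       C2_at (gy 0%nat) t /\ C2_at (gz 0%nat) t /\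
       norm3 1 (Derive (gy 0%nat) t) (Derive (gz 0%nat) t) < C /\
       (lam - xi - 1) / 4 * Rabs (D2 (gz 0%nat) t) > 3 * M * C ^ 2 /\
       (lam - xi - 1) / 4 * Rabs (D2 (gz 0%nat) t) > xi * Rabs (D2 (gy 0%nat) t) /\
       Rabs (Derive (gy 0%nat) t) < C0 /\
       Rabs (Derive (gz 0%nat) t) < Delta) ->
    (* hypotheses on the iterates gamma^(n), n = 1..m *)
    (forall n : nat, (1 <= n <= m)%nat ->
       (forall t, a < t < b ->
          ex_derive (xn n) t /\ Derive (xn n) t <> 0 /\
          Nat.iter n G (curve (gy 0%nat) (gz 0%nat) t) = curve (gy n) (gz n) (xn n t)) /\
       (forall s, J n s ->
          C2_at (gy n) s /\ C2_at (gz n) s /\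
          Rabs (Derive (gy n) s) < C0 /\ Rabs (Derive (gz n) s) < Delta)) ->
    (* conclusion *)
    forall n : nat, (1 <= n /\ n + 1 <= m)%nat ->
    forall tt ss : R, J (n - 1)%nat tt -> J n ss ->
      curve (gy n) (gz n) ss = G (curve (gy (n - 1)%nat) (gz (n - 1)%nat) tt) ->
      Rabs (D2 (gz n) ss) > Rabs (D2 (gz (n - 1)%nat) tt).
Proof.
  intros C0 HC0. exists (0.01 / (1 + C0 + Delta0)).
  split; [apply Rdiv_lt_0_compat; unfold Delta0; lra|].
  intros xi Delta Hxi HDelta M HM G HG Hhess Hclose a b gy gz m C xn J Hgamma Hiter
    n Hn tt ss Htt _ Hcurve.
  assert (HxiC : xi * (1 + C0 + Delta0) < 0.01)
    by (apply Rlt_div_r; [unfold Delta0; lra|apply Hxi]).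
  assert (Hstep : forall k t, (k < m)%nat -> a < t < b ->
            G (curve (gy k) (gz k) (xn k t)) = curve (gy (S k)) (gz (S k)) (xn (S k) t)).
  { intros k t Hk Ht. destruct (proj1 (Hiter (S k) ltac:(lia)) t Ht) as [_ [_ <-]].
    destruct k as [|k]; [reflexivity|].
    now destruct (proj1 (Hiter (S k) ltac:(lia)) t Ht) as [_ [_ <-]]. }
  destruct n as [|n]; [lia|]. replace (S n - 1)%nat with n in * by lia.
  destruct Htt as [t [Ht ->]].
  replace ss with (xn (S n) t).
  2: { change ss with (coord AX (curve (gy (S n)) (gz (S n)) ss)).
       rewrite Hcurve, Hstep by (auto; lia). reflexivity. }
  apply (orbit_curvature_grows G xi M C0 a b gy gz xn m); auto; try lia.
  - exact (proj1 HG).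
  - exact (proj1 Hxi).
  - intros [|k] u Hk Hu.
    + destruct Hu as [t' [Ht' ->]]. change (xn 0%nat t') with t'.
      destruct (Hgamma t' Ht') as [? [? [_ [_ [_ [? ?]]]]]].
      refine (conj _ (conj _ (conj _ _))); auto; lra.
    + destruct (proj2 (Hiter (S k) ltac:(lia)) u Hu) as [? [? [? ?]]].
      refine (conj _ (conj _ (conj _ _))); auto; lra.
  - intros [|k] u Hk [t' [Ht' ->]].
    + eapply filter_imp; [|exact (open_and _ _ (open_gt a) (open_lt b) t' Ht')].
      intros v Hv. now exists v.
    + apply image_is_nbhd; [exact Ht'| |]; intros; apply (proj1 (Hiter (S k) ltac:(lia))); auto.
  - intros t' Ht'. destruct (Hgamma t' Ht') as [_ [_ [_ [? [? _]]]]]. now split.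
Qed.
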